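(* Let $X$ be a supertropical semiring and $a\in X$. (1) The fiber $\nu^{-1}(a)$ is non-empty if and only if $a\in\nu X$; in this case $a$ is the largest element of $\nu^{-1}(a)$ with respect to the intrinsic order. (2) Any two distinct elements of $\nu^{-1}(a)\setminus\{a\}$ are incomparable in the intrinsic order.
   Context: A semiring $(X,+,0,\cdot)$: $(X,+,0)$ commutative monoid, $(X,\cdot)$ semigroup, distributivity, $0$ absorbing. Intrinsic order: $a\le b$ iff $a+x=b$ for some $x$. $\nu:X\to X$, $\nu(x)=x+x$; $\nu X=\{a: a=a+a\}$. A supertropical semiring is a unital commutative semiring with $2=4$ (where $n=1+\dots+1$), such that $a+b\in\{a,b\}$ whenever $\nu(a)\ne\nu(b)$, and $a+b=\nu(a)$ whenever $\nu(a)=\nu(b)$. *)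

From HB Require Import structures.
From mathcomp Require Import all_boot all_algebra.
Set Implicit Arguments. Unset Strict Implicit. Unset Printing Implicit Defensive.
Import GRing.Theory.
Local Open Scope ring_scope.

(* A unital commutative semiring is a comPzSemiRingType (0 absorbing and
   distributivity are part of the structure; 0 = 1 is not excluded). *)

Definition nu (X : comPzSemiRingType) (x : X) : X := x + x.

Definition in_nuX (X : comPzSemiRingType) (a : X) : Prop := a = a + a.

Definition ile (X : comPzSemiRingType) (a b : X) : Prop := exists x, a + x = b.

Definition supertropical (X : comPzSemiRingType) : Prop :=
  [/\ (2%:R : X) = 4%:R,
      (forall a b : X, nu a <> nu b -> a + b = a \/ a + b = b) &
      (forall a b : X, nu a = nu b -> a + b = nu a)].

(* Since 2 = 4, multiplying by x gives nu (nu x) = nu x, so every ghost nu x is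
   idempotent and conversely an idempotent a is its own ghost; a ghost a
   dominates every x in its fiber because a = x + x.  For incomparability,
   if x + z = y with nu x = nu y = a: either nu z = a and then y = a, or
   x + z is x or z, where x + z = x gives y = x and x + z = z gives
   nu z = nu y = nu x, which was excluded. *)

From HB Require Import structures.
From mathcomp Require Import all_boot all_algebra.
Import GRing.Theory.
Local Open Scope ring_scope.

Lemma ile_addr (X : comPzSemiRingType) (x y : X) : ile x (x + y).
Proof. by exists y. Qed.

Lemma in_nuX_nu_eq (X : comPzSemiRingType) (a : X) : in_nuX a -> nu a = a.
Proof. by move=> ha; rewrite /nu -ha. Qed.

Section Supertropical.

Variables (X : comPzSemiRingType) (hX : supertropical X).

Lemma nu_nu (x : X) : nu (nu x) = nu x.
Proof.
case: hX => h24 _ _.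
have := congr1 (fun r => r * x) h24; rewrite /= !mulr_natl.
by rewrite /nu !mulrS mulr0n addr0 !addrA.
Qed.

Lemma in_nuXP (a : X) : (exists x : X, nu x = a) <-> in_nuX a.
Proof.
split=> [[x <-] | ha]; first by rewrite /in_nuX -/(nu (nu x)) nu_nu.
by exists a; apply: in_nuX_nu_eq.
Qed.

Lemma fiber_ile_not_ile (x y : X) :
  nu x = nu y -> y <> nu y -> x <> y -> ~ ile x y.
Proof.
move=> hxy ya xy [z hz]; case: hX => _ hne heq.
have [exz | nexz] := eqVneq (nu x) (nu z).
  by apply: ya; rewrite -hxy -hz heq.
case: (hne x z (elimN eqP nexz)) => e; first by apply: xy; rewrite -hz e.
by move/eqP: nexz; apply; rewrite -e hz.
Qed.

End Supertropical.

Theorem lemma5p4 (X : comPzSemiRingType) (hX : supertropical X) (a : X) :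
  ((exists x : X, nu x = a) <-> in_nuX a) /\
  (in_nuX a -> nu a = a /\ (forall x : X, nu x = a -> ile x a)) /\
  (forall x y : X, nu x = a -> nu y = a -> x <> a -> y <> a -> x <> y ->
     ~ ile x y /\ ~ ile y x).
Proof.
split; first exact: in_nuXP.
split.
  by move=> ha; split=> [|x <-]; [exact: in_nuX_nu_eq | exact: ile_addr].
move=> x y <- hy xa ya xy.
by split; apply: fiber_ile_not_ile => //; [rewrite hy | move/esym].
Qed.
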